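(* Let $G$ be a $\sigma$-compact locally compact Abelian group, $C>0$, and $\{P_\varepsilon\}_{0<\varepsilon<C}$ a family of subsets of $G$ satisfying: (A1) $0\in P_\varepsilon=-P_\varepsilon$ for all $0<\varepsilon<C$; (A2) each $P_\varepsilon$ is locally finite; (A3) $P_\varepsilon+P_{\varepsilon'}\subset P_{\varepsilon+\varepsilon'}$ whenever $\varepsilon+\varepsilon'<C$; (A4) each $P_\varepsilon$ is relatively dense. Then for every $0<\varepsilon<C$ the set $P_\varepsilon+\bigcap_{0<\varepsilon'<C}P_{\varepsilon'}$ is a model set. In particular, if $\bigcap_{0<\varepsilon'<C}P_{\varepsilon'}=\{0\}$, then every $P_\varepsilon$, $0<\varepsilon<C$, is a model set.
   Context: Locally finite: finite intersection with every compact set. Relatively dense: $A+K=G$ for some compact $K$. A cut and project scheme $(G\times H,\widetilde L)$: $H$ a locally compact Abelian group, $\widetilde L\subset G\times H$ a lattice (discrete, cocompact subgroup) such that $\pi_1|_{\widetilde L}$ is injective and $\pi_2(\widetilde L)$ is dense in $H$; for $x\in\pi_1(\widetilde L)$, $x^\star:=\pi_2((\pi_1|_{\widetilde L})^{-1}(x))$. For $W\subset H$, $\Lambda(W):=\{x\in\pi_1(\widetilde L): x^\star\in W\}$. A model set is a set of the form $\Lambda(W)$ for some cut and project scheme and some precompact $W\subset H$ with nonempty interior. *)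

From Stdlib Require Import Reals List.
Open Scope R_scope.

Definition set (T : Type) := T -> Prop.
Definition subset {T} (A B : set T) := forall x, A x -> B x.
Definition seteq {T} (A B : set T) := forall x, A x <-> B x.

Record is_topology {T : Type} (op : set T -> Prop) : Prop := {
  top_full : op (fun _ => True);
  top_inter : forall U V, op U -> op V -> op (fun x => U x /\ V x);
  top_union : forall (I : Type) (U : I -> set T),
      (forall i, op (U i)) -> op (fun x => exists i, U i x)
}.

Definition prod_open {T S} (opT : set T -> Prop) (opS : set S -> Prop)
  (W : set (T * S)) : Prop :=
  forall p, W p -> exists U V, opT U /\ opS V /\ U (fst p) /\ V (snd p) /\
     (forall x y, U x -> V y -> W (x, y)).

Definition continuous {T S} (opT : set T -> Prop) (opS : set S -> Prop)
  (f : T -> S) : Prop :=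
  forall V, opS V -> opT (fun x => V (f x)).

Definition hausdorff {T} (op : set T -> Prop) : Prop :=
  forall x y, x <> y -> exists U V, op U /\ op V /\ U x /\ V y /\
     (forall z, U z -> V z -> False).

Definition compact {T} (op : set T -> Prop) (K : set T) : Prop :=
  forall (I : Type) (U : I -> set T), (forall i, op (U i)) ->
    subset K (fun x => exists i, U i x) ->
    exists l : list I, subset K (fun x => exists i, In i l /\ U i x).

Definition closure {T} (op : set T -> Prop) (A : set T) : set T :=
  fun x => forall U, op U -> U x -> exists y, U y /\ A y.

Definition dense {T} (op : set T -> Prop) (A : set T) : Prop :=
  forall x, closure op A x.

Definition precompact {T} (op : set T -> Prop) (A : set T) : Prop :=
  compact op (closure op A).

Definition nonempty_interior {T} (op : set T -> Prop) (A : set T) : Prop :=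
  exists U, op U /\ (exists x, U x) /\ subset U A.

Record TopAbGroup := {
  carrier :> Type;
  gzero : carrier;
  gadd : carrier -> carrier -> carrier;
  gopp : carrier -> carrier;
  gopen : set carrier -> Prop;
  gaddA : forall x y z, gadd x (gadd y z) = gadd (gadd x y) z;
  gaddC : forall x y, gadd x y = gadd y x;
  gadd0 : forall x, gadd gzero x = x;
  gaddN : forall x, gadd (gopp x) x = gzero;
  gtop : is_topology gopen;
  gadd_cont : continuous (prod_open gopen gopen) gopen
                (fun p => gadd (fst p) (snd p));
  gopp_cont : continuous gopen gopen gopp
}.
Arguments gzero {_}.
Arguments gadd {_}.
Arguments gopp {_}.
Arguments gopen {_}.

Definition locally_compact (G : TopAbGroup) : Prop :=
  forall x : G, exists U K, gopen U /\ U x /\ compact gopen K /\ subset U K.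

Definition LCA (G : TopAbGroup) : Prop :=
  hausdorff (@gopen G) /\ locally_compact G.

Definition sigma_compact (G : TopAbGroup) : Prop :=
  exists K : nat -> set G, (forall n, compact gopen (K n)) /\
    forall x, exists n, K n x.

Definition setadd {G : TopAbGroup} (A B : set G) : set G :=
  fun z => exists a b, A a /\ B b /\ z = gadd a b.

Definition locally_finite {G : TopAbGroup} (A : set G) : Prop :=
  forall K, compact gopen K ->
    exists l : list G, forall x, K x -> A x -> In x l.

Definition relatively_dense {G : TopAbGroup} (A : set G) : Prop :=
  exists K, compact gopen K /\ forall x, setadd A K x.

Definition prod_top (G H : TopAbGroup) : set (G * H) -> Prop :=
  prod_open (@gopen G) (@gopen H).

Definition padd {G H : TopAbGroup} (p q : G * H) : G * H :=
  (gadd (fst p) (fst q), gadd (snd p) (snd q)).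

Definition is_subgroup {G H : TopAbGroup} (L : set (G * H)) : Prop :=
  L (gzero, gzero) /\
  (forall p q, L p -> L q -> L (padd p q)) /\
  (forall p, L p -> L (gopp (fst p), gopp (snd p))).

Definition discrete_in {G H : TopAbGroup} (L : set (G * H)) : Prop :=
  forall p, L p -> exists W, prod_top G H W /\ W p /\
     (forall q, W q -> L q -> q = p).

Definition cocompact {G H : TopAbGroup} (L : set (G * H)) : Prop :=
  exists K, compact (prod_top G H) K /\
     forall p, exists l k, L l /\ K k /\ p = padd l k.

Definition is_lattice {G H : TopAbGroup} (L : set (G * H)) : Prop :=
  is_subgroup L /\ discrete_in L /\ cocompact L.

Definition cut_and_project_scheme (G H : TopAbGroup) (L : set (G * H)) : Prop :=
  LCA H /\ is_lattice L /\
  (forall p q, L p -> L q -> fst p = fst q -> p = q) /\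
  dense (@gopen H) (fun h => exists x, L (x, h)).

(** Lambda(W) = { x in pi1(L) : x^star in W }; since pi1 is injective on L,
    x^star is the unique h with (x,h) in L. *)
Definition window_set {G H : TopAbGroup} (L : set (G * H)) (W : set H) : set G :=
  fun x => exists h, L (x, h) /\ W h.

Definition model_set (G : TopAbGroup) (A : set G) : Prop :=
  exists (H : TopAbGroup) (L : set (G * H)) (W : set H),
    cut_and_project_scheme G H L /\ precompact (@gopen H) W /\
    nonempty_interior (@gopen H) W /\ seteq A (window_set L W).

(* By (A1) and (A3), [d x y = inf {e | x - y in P e}] is a translation-invariant pseudometric
   on the group [Gamma] generated by the [P e], whose null set is the intersection [Pcap] of
   all [P e]. The internal group is the completion of [Gamma] modulo [Pcap] for [d]. By (A2)
   and (A4) its closed balls of radius [< C] are totally bounded, so it is locally compact;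
   the diagonal embedding of [Gamma] is a lattice; and the window made of the open [e]-ball
   around [0] together with the images of [P e] is precompact with nonempty interior and cuts
   out exactly [P e + Pcap]. *)

From Stdlib Require Import Reals Lra Lia List.
From Stdlib Require Import ClassicalEpsilon ProofIrrelevance FunctionalExtensionality
  PropExtensionality Classical.
Open Scope R_scope.

Definition is_glb (E : R -> Prop) (m : R) : Prop :=
  (forall x, E x -> m <= x) /\ (forall r, (forall x, E x -> r <= x) -> r <= m).

Lemma glb_exists (E : R -> Prop) :
  (exists x, E x) -> (exists b, forall x, E x -> b <= x) -> exists m, is_glb E m.
Proof.
  intros [x0 Hx0] [b Hb].
  destruct (completeness (fun y => E (- y))) as [l [Hub Hlub]].
  - exists (- b). intros y Hy. specialize (Hb _ Hy). lra.
  - exists (- x0). rewrite Ropp_involutive. exact Hx0.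
  - exists (- l). split.
    + intros x Hx. assert (l >= - x) by (apply Rle_ge, Hub; rewrite Ropp_involutive; exact Hx).
      lra.
    + intros r Hr. assert (l <= - r) by (apply Hlub; intros y Hy; specialize (Hr _ Hy); lra).
      lra.
Qed.

(* The value [0] for sets without an infimum is never used. *)
Definition Rinf (E : R -> Prop) : R :=
  match excluded_middle_informative (exists m, is_glb E m) with
  | left h => proj1_sig (constructive_indefinite_description _ h)
  | right _ => 0
  end.

Lemma Rinf_spec (E : R -> Prop) :
  (exists x, E x) -> (exists b, forall x, E x -> b <= x) -> is_glb E (Rinf E).
Proof.
  intros hne hlb. unfold Rinf. destruct excluded_middle_informative as [h|h].
  - exact (proj2_sig (constructive_indefinite_description _ h)).
  - exfalso. apply h, glb_exists; assumption.
Qed.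

Lemma Rinf_le (E : R -> Prop) x b : (forall y, E y -> b <= y) -> E x -> Rinf E <= x.
Proof. intros hb hx. apply (Rinf_spec E); eauto. Qed.

Lemma Rinf_ge (E : R -> Prop) r :
  (exists x, E x) -> (forall y, E y -> r <= y) -> r <= Rinf E.
Proof. intros hx hb. apply (Rinf_spec E); eauto. Qed.

Lemma Rinf_lt (E : R -> Prop) r : (exists x, E x) -> (exists b, forall y, E y -> b <= y) ->
  Rinf E < r -> exists x, E x /\ x < r.
Proof.
  intros hne hlb hlt. apply NNPP; intro hn.
  assert (r <= Rinf E).
  { apply Rinf_ge; [exact hne|]. intros y Hy. apply Rnot_lt_le. intro. apply hn; eauto. }
  lra.
Qed.

Definition half_pow (n : nat) : R := (/2) ^ n.

Lemma half_pow_pos n : 0 < half_pow n.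
Proof. unfold half_pow. apply pow_lt. lra. Qed.

Lemma half_pow_S n : half_pow (S n) = half_pow n / 2.
Proof. unfold half_pow. simpl. field. Qed.

Lemma half_pow_small e : 0 < e -> exists n, half_pow n <= e.
Proof.
  intros he. destruct (pow_lt_1_zero (/2)) with (y := e) as [N HN].
  - rewrite Rabs_pos_eq; lra.
  - exact he.
  - exists N. specialize (HN N (le_n _)).
    rewrite Rabs_pos_eq in HN by (left; apply pow_lt; lra). unfold half_pow. lra.
Qed.

Lemma le_of_half_pow x y : (forall n, x <= y + 2 * half_pow n) -> x <= y.
Proof.
  intros h. apply Rle_plus_epsilon. intros eps heps.
  destruct (half_pow_small (eps / 2)) as [n hn]; [lra|]. specialize (h n). lra.
Qed.

Lemma Rabs_le_inv x a : Rabs x <= a -> -a <= x <= a.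
Proof.
  intros h. pose proof (Rle_abs x) as hx. pose proof (Rle_abs (-x)) as hnx.
  rewrite Rabs_Ropp in hnx. lra.
Qed.

Lemma set_ext {T} (A B : set T) : (forall x, A x <-> B x) -> A = B.
Proof.
  intros h. apply functional_extensionality; intro x. apply propositional_extensionality, h.
Qed.

Lemma open_of_nbhs {T} (op : set T -> Prop) (S : set T) : is_topology op ->
  (forall x, S x -> exists A, op A /\ A x /\ subset A S) -> op S.
Proof.
  intros ht h.
  pose (J := {A : set T | op A /\ subset A S}).
  assert (E : S = (fun x => exists j : J, proj1_sig j x)).
  { apply set_ext; intro x; split.
    - intro hx. destruct (h x hx) as [A [hA [hxA hAS]]]. exists (exist _ A (conj hA hAS)).
      exact hxA.
    - intros [j hx]. exact (proj2 (proj2_sig j) x hx). }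
  rewrite E. apply (top_union _ ht). intros j. exact (proj1 (proj2_sig j)).
Qed.

Lemma open_finite_inter {T J} (op : set T -> Prop) (l : list J) (f : J -> set T) :
  is_topology op -> (forall j, In j l -> op (f j)) ->
  op (fun x => forall j, In j l -> f j x).
Proof.
  intros ht. induction l as [|j l IH]; intros h.
  - replace (fun x : T => forall j0 : J, In j0 nil -> f j0 x) with (fun _ : T => True).
    + apply (top_full _ ht).
    + apply set_ext; intro x; split; [intros _ j0 []|auto].
  - replace (fun x : T => forall j0 : J, In j0 (j :: l) -> f j0 x)
      with (fun x => f j x /\ (fun x => forall j0, In j0 l -> f j0 x) x).
    + apply (top_inter _ ht); [apply h; left; reflexivity|].
      apply IH. intros; apply h; right; assumption.
    + apply set_ext; intro x; split.
      * intros [H1 H2] j0 [<-|Hj]; auto.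
      * intros H0. split; [apply H0; left; reflexivity|]. intros; apply H0; right; assumption.
Qed.

Lemma tube_lemma {T S} (opT : set T -> Prop) (opS : set S -> Prop) (K2 : set S)
    {I : Type} (U : I -> set (T * S)) x :
  is_topology opT -> compact opS K2 -> (forall i, prod_open opT opS (U i)) ->
  (forall y, K2 y -> exists i, U i (x, y)) ->
  exists A (l : list I), opT A /\ A x /\
    forall x' y, A x' -> K2 y -> exists i, In i l /\ U i (x', y).
Proof.
  intros ht hK2 HU Hcov.
  pose (J := {i : I & {A : set T & {B : set S | opT A /\ opS B /\ A x /\
               (forall x' y, A x' -> B y -> U i (x', y))}}}).
  destruct (hK2 J (fun j => proj1_sig (projT2 (projT2 j)))) as [lj Hlj].
  - intros j. exact (proj1 (proj2 (proj2_sig (projT2 (projT2 j))))).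
  - intros y hy. destruct (Hcov y hy) as [i Hi].
    destruct (HU i (x, y) Hi) as [A [B [hA [hB [hxA [hyB hAB]]]]]].
    exists (existT _ i (existT _ A (exist _ B (conj hA (conj hB (conj hxA hAB)))))). exact hyB.
  - exists (fun x' => forall j, In j lj -> projT1 (projT2 j) x'), (map (@projT1 _ _) lj).
    split; [|split].
    + apply open_finite_inter; [exact ht|]. intros j _.
      exact (proj1 (proj2_sig (projT2 (projT2 j)))).
    + intros j _. exact (proj1 (proj2 (proj2 (proj2_sig (projT2 (projT2 j)))))).
    + intros x' y hA hy. destruct (Hlj y hy) as [j [Hj Hv]].
      exists (projT1 j). split; [apply in_map; exact Hj|].
      specialize (hA j Hj). destruct j as [i [A [B [hA' [hB [hxA hAB]]]]]]. simpl in *.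
      apply hAB; assumption.
Qed.

Lemma compact_prod {T S} (opT : set T -> Prop) (opS : set S -> Prop) K1 K2 :
  is_topology opT -> compact opT K1 -> compact opS K2 ->
  compact (prod_open opT opS) (fun p => K1 (fst p) /\ K2 (snd p)).
Proof.
  intros ht hK1 hK2 I U HU Hcov.
  pose (J := {A : set T & {l : list I | opT A /\
               forall x' y, A x' -> K2 y -> exists i, In i l /\ U i (x', y)}}).
  destruct (hK1 J (@projT1 _ _)) as [lj Hlj].
  - intros j. exact (proj1 (proj2_sig (projT2 j))).
  - intros x hx.
    destruct (tube_lemma opT opS K2 U x ht hK2 HU) as [A [l [hA [hxA htube]]]].
    { intros y hy. exact (Hcov (x, y) (conj hx hy)). }
    exists (existT _ A (exist _ l (conj hA htube))). exact hxA.
  - exists (flat_map (fun j : J => proj1_sig (projT2 j)) lj).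
    intros [x y] [hx hy]. simpl in *. destruct (Hlj x hx) as [j [Hj HA]].
    destruct j as [A [l [hA htube]]]. simpl in *.
    destruct (htube x y HA hy) as [i [Hi HUi]]. exists i. split; [|exact HUi].
    apply in_flat_map. exists (existT _ A (exist _ l (conj hA htube))). auto.
Qed.

Section GroupAlgebra.
Context {G : TopAbGroup}.
Implicit Types a b c x y z w : G.
Local Notation "a + b" := (gadd a b).
Local Notation "a - b" := (gadd a (gopp b)).

Lemma gadd0r x : x + gzero = x.
Proof. rewrite gaddC. apply gadd0. Qed.

Lemma gaddNr x : x - x = gzero.
Proof. rewrite gaddC. apply gaddN. Qed.

Lemma gaddKl x y : gopp x + (x + y) = y.
Proof. rewrite gaddA, gaddN, gadd0. reflexivity. Qed.

Lemma gaddKr x y : x + (gopp x + y) = y.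
Proof. rewrite gaddA, gaddNr, gadd0. reflexivity. Qed.

Lemma gopp_uniq x y : x + y = gzero -> y = gopp x.
Proof. intros h. rewrite <- (gaddKl x y), h, gadd0r. reflexivity. Qed.

Lemma goppK x : gopp (gopp x) = x.
Proof. symmetry. apply gopp_uniq, gaddN. Qed.

Lemma gopp0 : gopp (@gzero G) = gzero.
Proof. symmetry. apply gopp_uniq, gadd0. Qed.

Lemma goppD x y : gopp (x + y) = gopp x + gopp y.
Proof.
  symmetry. apply gopp_uniq.
  rewrite <- gaddA, (gaddC _ (gopp x) (gopp y)), (gaddA _ y), gaddNr, gadd0, gaddNr.
  reflexivity.
Qed.

Lemma gaddAC x y z : (x + y) + z = (x + z) + y.
Proof. rewrite <- !gaddA, (gaddC _ y z). reflexivity. Qed.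

Lemma gaddCA x y z : x + (y + z) = y + (x + z).
Proof. rewrite !gaddA, (gaddC _ x y). reflexivity. Qed.

Lemma gsub_eq0 x y : x - y = gzero -> x = y.
Proof. intros h. rewrite <- (goppK y). apply gopp_uniq. rewrite gaddC. exact h. Qed.

Lemma gsubr0 a : a - gzero = a.
Proof. rewrite gopp0, gadd0r. reflexivity. Qed.

Lemma goppB a b : gopp (a - b) = b - a.
Proof. rewrite goppD, goppK, gaddC. reflexivity. Qed.

Lemma gsubNN a b : gopp a - gopp b = b - a.
Proof. rewrite goppK, gaddC. reflexivity. Qed.

Lemma gsubD x y w : (x - y) - w = x - (y + w).
Proof. rewrite goppD, gaddA. reflexivity. Qed.

Lemma gsub_add2r a b c : (a + c) - (b + c) = a - b.
Proof. rewrite goppD, <- gaddA, (gaddCA c), gaddNr, gadd0r. reflexivity. Qed.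

Lemma gsub_sub2r x y z : (x - z) - (y - z) = x - y.
Proof. apply gsub_add2r. Qed.

Lemma gsub_chain a b c : (a - b) + (b - c) = a - c.
Proof. rewrite <- gaddA, gaddKl. reflexivity. Qed.

Lemma gsubKr x y : x - (x - y) = y.
Proof. rewrite goppD, goppK, gaddKr. reflexivity. Qed.

Lemma gsubNK x y : (x - y) - gopp y = x.
Proof. rewrite goppK, <- gaddA, gaddN, gadd0r. reflexivity. Qed.

Lemma gaddKsub y w : (y + w) - y = w.
Proof. rewrite gaddC, gaddKl. reflexivity. Qed.

Lemma gsub_split a b y z : a - b = (y - z) + ((a - y) - (b - z)).
Proof.
  rewrite goppB, (gaddC _ a (gopp y)), <- (gaddA _ (gopp y)), (gaddA _ (y - z)).
  rewrite (gaddC _ y (gopp z)), <- (gaddA _ (gopp z) y), gaddNr, gadd0r, gaddCA, gaddKl.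
  reflexivity.
Qed.

Lemma gopen_transl (U : set G) c : gopen U -> gopen (fun x => U (x + c)).
Proof.
  intros hU. apply open_of_nbhs; [apply gtop|].
  intros x hx. destruct (gadd_cont G U hU (x, c) hx) as [A [B [hA [_ [hxA [hcB hAB]]]]]].
  exists A. split; [exact hA|]. split; [exact hxA|]. intros x' hx'. exact (hAB x' c hx' hcB).
Qed.

End GroupAlgebra.

Section Separation.
Variable G : TopAbGroup.
Hypothesis G_hausdorff : hausdorff (@gopen G).

Lemma separate_zero_list (l : list G) :
  exists V, gopen V /\ V gzero /\ forall q, In q l -> V q -> q = gzero.
Proof.
  induction l as [|q l [V [hV [hV0 hVl]]]].
  - exists (fun _ => True). split; [apply (top_full _ (gtop G))|]. split; [exact I|].
    intros q [].
  - destruct (classic (q = gzero)) as [->|hq].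
    + exists V. split; [exact hV|]. split; [exact hV0|]. intros q' [<-|hq'] hVq'; auto.
    + destruct (G_hausdorff gzero q (not_eq_sym hq)) as [O [O' [hO [hO' [hO0 [hOq disj]]]]]].
      exists (fun x => V x /\ O x). split; [apply (top_inter _ (gtop G)); assumption|].
      split; [split; assumption|]. intros q' [<-|hq'] [hVq' hOq'].
      * exfalso. exact (disj q hOq' hOq).
      * apply hVl; assumption.
Qed.

Lemma locally_finite_isolated (A : set G) : locally_compact G -> locally_finite A ->
  exists V, gopen V /\ V gzero /\ forall x, V x -> A x -> x = gzero.
Proof.
  intros hlc hA. destruct (hlc gzero) as [U [K [hU [hU0 [hK hUK]]]]].
  destruct (hA K hK) as [l hl]. destruct (separate_zero_list l) as [V [hV [hV0 hVl]]].
  exists (fun x => U x /\ V x). split; [apply (top_inter _ (gtop G)); assumption|].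
  split; [split; assumption|]. intros x [hUx hVx] hAx. apply hVl; [apply hl; auto|exact hVx].
Qed.

End Separation.

Section Construction.
Variable G : TopAbGroup.
Variable C : R.
Hypothesis HC : 0 < C.
Variable P : R -> set G.
Hypothesis A1 : forall e, 0 < e < C -> P e gzero /\ (forall x, P e x <-> P e (gopp x)).
Hypothesis A3 : forall e e', 0 < e -> 0 < e' -> e + e' < C ->
  subset (setadd (P e) (P e')) (P (e + e')).

Definition Pcap (x : G) : Prop := forall e, 0 < e < C -> P e x.

Definition gauge_set (x : G) (r : R) : Prop := (0 < r < C /\ P r x) \/ r = C.
Definition gauge (x : G) : R := Rinf (gauge_set x).

Lemma gauge_set_ne x : exists r, gauge_set x r.
Proof. exists C. right. reflexivity. Qed.

Lemma gauge_set_ge0 x r : gauge_set x r -> 0 <= r.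
Proof. intros [[h _]|h]; lra. Qed.

Lemma gauge_ge0 x : 0 <= gauge x.
Proof. apply Rinf_ge; [apply gauge_set_ne|apply gauge_set_ge0]. Qed.

Lemma gauge_le_C x : gauge x <= C.
Proof. apply (Rinf_le _ _ 0); [apply gauge_set_ge0|right; reflexivity]. Qed.

Lemma gauge_le e x : 0 < e < C -> P e x -> gauge x <= e.
Proof. intros he hp. apply (Rinf_le _ _ 0); [apply gauge_set_ge0|left; auto]. Qed.

Lemma P_mono e e' x : 0 < e -> e <= e' -> e' < C -> P e x -> P e' x.
Proof.
  intros he hee' he' hp. destruct (Rle_lt_or_eq_dec _ _ hee') as [hlt|<-]; [|exact hp].
  replace e' with (e + (e' - e)) by ring. apply A3; try lra.
  exists x, gzero. split; [exact hp|]. split.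
  - apply (proj1 (A1 (e' - e) ltac:(lra))).
  - rewrite gadd0r. reflexivity.
Qed.

Lemma P_of_gauge_lt e x : 0 < e < C -> gauge x < e -> P e x.
Proof.
  intros he hlt.
  destruct (Rinf_lt _ _ (gauge_set_ne x) (ex_intro _ 0 (gauge_set_ge0 x)) hlt)
    as [r [[[hr hPr]| ->] hre]].
  - apply (P_mono r); auto; lra.
  - lra.
Qed.

Lemma gauge_eq0 x : gauge x = 0 <-> Pcap x.
Proof.
  split.
  - intros h e he. apply P_of_gauge_lt; lra.
  - intros hx. apply Rle_antisym; [|apply gauge_ge0].
    apply Rnot_lt_le; intro hpos.
    set (m := Rmin (gauge x) C / 2).
    assert (0 < Rmin (gauge x) C) by (apply Rmin_glb_lt; lra).
    pose proof (Rmin_r (gauge x) C). pose proof (Rmin_l (gauge x) C).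
    assert (gauge x <= m) by (apply gauge_le; [|apply hx]; unfold m; lra).
    unfold m in *. lra.
Qed.

Lemma gauge0 : gauge gzero = 0.
Proof. apply gauge_eq0. intros e he. exact (proj1 (A1 e he)). Qed.

Lemma gaugeN_le x : gauge (gopp x) <= gauge x.
Proof.
  apply Rinf_ge; [apply gauge_set_ne|]. intros r [[hr hPr]| ->].
  - apply gauge_le; [exact hr|]. apply (proj2 (A1 r hr)). rewrite goppK. exact hPr.
  - apply gauge_le_C.
Qed.

Lemma gaugeN x : gauge (gopp x) = gauge x.
Proof.
  apply Rle_antisym; [apply gaugeN_le|]. rewrite <- (goppK x) at 1. apply gaugeN_le.
Qed.

Lemma gaugeD x y : gauge (gadd x y) <= gauge x + gauge y.
Proof.
  destruct (Rle_lt_dec C (gauge x + gauge y)) as [h|h].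
  { pose proof (gauge_le_C (gadd x y)). lra. }
  apply Rle_plus_epsilon. intros eps heps.
  set (t := Rmin (eps / 2) ((C - gauge x - gauge y) / 4)).
  assert (0 < t) by (apply Rmin_glb_lt; lra).
  assert (t <= eps / 2) by apply Rmin_l.
  assert (t <= (C - gauge x - gauge y) / 4) by apply Rmin_r.
  pose proof (gauge_ge0 x). pose proof (gauge_ge0 y).
  assert (gauge (gadd x y) <= (gauge x + t) + (gauge y + t)).
  { apply gauge_le; [lra|]. apply A3; try lra.
    exists x, y. repeat split; try reflexivity; apply P_of_gauge_lt; lra. }
  lra.
Qed.

Inductive span_P : G -> Prop :=
| span_P0 : span_P gzero
| span_P_cons e x y : 0 < e < C -> P e x -> span_P y -> span_P (gadd x y).

Lemma span_P_of e x : 0 < e < C -> P e x -> span_P x.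
Proof. intros he hp. rewrite <- (gadd0r x). apply (span_P_cons e); auto. constructor. Qed.

Lemma span_PD x y : span_P x -> span_P y -> span_P (gadd x y).
Proof.
  induction 1 as [|e x z he hx hz IH]; intros hy.
  - rewrite gadd0. exact hy.
  - rewrite <- gaddA. apply (span_P_cons e); auto.
Qed.

Lemma span_PN x : span_P x -> span_P (gopp x).
Proof.
  induction 1 as [|e x z he hx hz IH].
  - rewrite gopp0. constructor.
  - rewrite goppD. apply span_PD; [|exact IH].
    apply (span_P_of e); [exact he|]. apply (proj2 (A1 e he)). rewrite goppK. exact hx.
Qed.

Definition Gamma := {x : G | span_P x}.
Definition gval (a : Gamma) : G := proj1_sig a.
Definition gam0 : Gamma := exist _ gzero span_P0.
Definition gamD (a b : Gamma) : Gamma :=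
  exist _ (gadd (gval a) (gval b)) (span_PD _ _ (proj2_sig a) (proj2_sig b)).
Definition gamN (a : Gamma) : Gamma := exist _ (gopp (gval a)) (span_PN _ (proj2_sig a)).
Definition gamB (a b : Gamma) : Gamma := gamD a (gamN b).

Lemma gval_inj (a b : Gamma) : gval a = gval b -> a = b.
Proof.
  destruct a as [a ha], b as [b hb]. unfold gval. simpl. intros <-. f_equal.
  apply proof_irrelevance.
Qed.

Lemma gamBDl a b : gamB (gamD a b) a = b.
Proof. apply gval_inj. simpl. apply gaddKsub. Qed.

Lemma gamBK x y : gamB x (gamB x y) = y.
Proof. apply gval_inj. simpl. apply gsubKr. Qed.

Lemma gamNK a : gamN (gamN a) = a.
Proof. apply gval_inj. simpl. apply goppK. Qed.

(* Only a pseudometric: [gdist a b = 0] exactly when [a - b] lies in [Pcap]. *)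
Definition gdist (a b : Gamma) : R := gauge (gadd (gval a) (gopp (gval b))).

Lemma gdist_xx a : gdist a a = 0.
Proof. unfold gdist. rewrite gaddNr. apply gauge0. Qed.

Lemma gdistC a b : gdist a b = gdist b a.
Proof. unfold gdist. rewrite <- gaugeN, goppB. reflexivity. Qed.

Lemma gdist_tri a b c : gdist a c <= gdist a b + gdist b c.
Proof. unfold gdist. rewrite <- (gsub_chain (gval a) (gval b)). apply gaugeD. Qed.

Lemma gdist_ge0 a b : 0 <= gdist a b.
Proof. apply gauge_ge0. Qed.

Lemma gdistBr a b c : gdist (gamB a c) (gamB b c) = gdist a b.
Proof. unfold gdist, gamB, gamD, gamN. simpl. rewrite gsub_sub2r. reflexivity. Qed.

Lemma gdistN a b : gdist (gamN a) (gamN b) = gdist a b.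
Proof. unfold gdist, gamN. simpl. rewrite gsubNN, <- gaugeN, goppB. reflexivity. Qed.

Lemma gdist0r a : gdist a gam0 = gauge (gval a).
Proof. unfold gdist. simpl. rewrite gsubr0. reflexivity. Qed.

Lemma gdist_sub_le a b y z : gdist a b <= gdist y z + gdist (gamB a y) (gamB b z).
Proof.
  unfold gdist. simpl. rewrite (gsub_split (gval a) (gval b) (gval y) (gval z)). apply gaugeD.
Qed.

(** * Katetov functions *)

(* The internal space is the metric completion of [Gamma] modulo [Pcap], realised as the
   space of Katetov functions: 1-Lipschitz [f] with [d a b <= f a + f b] and [inf f = 0].
   These are exactly the distance functions to points of the completion. *)
Definition katetov (f : Gamma -> R) : Prop :=
  (forall a b, f a <= f b + gdist a b) /\ (forall a b, gdist a b <= f a + f b) /\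
  (forall eta, 0 < eta -> exists a, f a <= eta).

Lemma katetov_ge0 f a : katetov f -> 0 <= f a.
Proof. intros [_ [h _]]. specialize (h a a). rewrite gdist_xx in h. lra. Qed.

Definition Kat := {f : Gamma -> R | katetov f}.
Definition kval (h : Kat) : Gamma -> R := proj1_sig h.

Lemma kval_katetov h : katetov (kval h).
Proof. exact (proj2_sig h). Qed.

Lemma kval_ge0 h a : 0 <= kval h a.
Proof. apply katetov_ge0, kval_katetov. Qed.

Lemma kval_inj (h k : Kat) : (forall a, kval h a = kval k a) -> h = k.
Proof.
  destruct h as [f hf], k as [g hg]. unfold kval. simpl. intros e.
  assert (f = g) as <- by (apply functional_extensionality; exact e).
  f_equal. apply proof_irrelevance.
Qed.

Lemma katetov_dist a : katetov (fun x => gdist x a).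
Proof.
  split; [|split].
  - intros x y. pose proof (gdist_tri x y a). lra.
  - intros x y. rewrite (gdistC y a). apply gdist_tri.
  - intros eta he. exists a. rewrite gdist_xx. lra.
Qed.

Definition kat_of (a : Gamma) : Kat := exist _ (fun x => gdist x a) (katetov_dist a).

Definition infconv (f g : Gamma -> R) (x : Gamma) : R :=
  Rinf (fun r => exists y, r = f y + g (gamB x y)).

Section Infconv.
Variables f g : Gamma -> R.
Hypothesis f_ge0 : forall a, 0 <= f a.
Hypothesis g_ge0 : forall a, 0 <= g a.

Lemma infconv_le x y : infconv f g x <= f y + g (gamB x y).
Proof.
  apply (Rinf_le _ _ 0); [|exists y; reflexivity].
  intros r [z ->]. specialize (f_ge0 z). specialize (g_ge0 (gamB x z)). lra.
Qed.

Lemma infconv_ge0 x : 0 <= infconv f g x.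
Proof.
  apply Rinf_ge; [exists (f gam0 + g (gamB x gam0)), gam0; reflexivity|].
  intros r [y ->]. specialize (f_ge0 y). specialize (g_ge0 (gamB x y)). lra.
Qed.

End Infconv.

Lemma infconv_ge f g x r : (forall y, r <= f y + g (gamB x y)) -> r <= infconv f g x.
Proof.
  intros h. apply Rinf_ge; [exists (f gam0 + g (gamB x gam0)), gam0; reflexivity|].
  intros r' [y ->]. apply h.
Qed.

Lemma katetov_infconv f g : katetov f -> katetov g -> katetov (infconv f g).
Proof.
  intros hf hg.
  pose proof (fun a => katetov_ge0 f a hf) as f0. pose proof (fun a => katetov_ge0 g a hg) as g0.
  destruct hf as [hf1 [hf2 hf3]], hg as [hg1 [hg2 hg3]].
  split; [|split].
  - intros a b. cut (infconv f g a - gdist a b <= infconv f g b); [lra|].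
    apply infconv_ge. intros y. pose proof (infconv_le f g f0 g0 a y).
    pose proof (hg1 (gamB a y) (gamB b y)). rewrite gdistBr in *. lra.
  - intros a b. cut (gdist a b - infconv f g b <= infconv f g a); [lra|].
    apply infconv_ge. intros y. cut (gdist a b - f y - g (gamB a y) <= infconv f g b); [lra|].
    apply infconv_ge. intros z.
    pose proof (gdist_sub_le a b y z). pose proof (hf2 y z). pose proof (hg2 (gamB a y) (gamB b z)).
    lra.
  - intros eta he.
    destruct (hf3 (eta / 2)) as [a ha]; [lra|]. destruct (hg3 (eta / 2)) as [b hb]; [lra|].
    exists (gamD a b). pose proof (infconv_le f g f0 g0 (gamD a b) a) as hle.
    rewrite gamBDl in hle. lra.
Qed.

Lemma infconvC f g x : (forall a, 0 <= f a) -> (forall a, 0 <= g a) ->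
  infconv f g x = infconv g f x.
Proof.
  assert (le : forall f g, (forall a, 0 <= f a) -> (forall a, 0 <= g a) ->
                 infconv f g x <= infconv g f x).
  { intros f' g' f0 g0. apply infconv_ge. intros y.
    pose proof (infconv_le f' g' f0 g0 x (gamB x y)) as h. rewrite gamBK in h. lra. }
  intros f0 g0. apply Rle_antisym; auto.
Qed.

Lemma infconvA f g k x : (forall a, 0 <= f a) -> (forall a, 0 <= g a) -> (forall a, 0 <= k a) ->
  infconv f (infconv g k) x = infconv (infconv f g) k x.
Proof.
  intros f0 g0 k0.
  pose proof (infconv_ge0 g k g0 k0) as gk0. pose proof (infconv_ge0 f g f0 g0) as fg0.
  apply Rle_antisym.
  - apply infconv_ge. intros z. cut (infconv f (infconv g k) x - k (gamB x z) <= infconv f g z).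
    { lra. }
    apply infconv_ge. intros y.
    pose proof (infconv_le f (infconv g k) f0 gk0 x y).
    pose proof (infconv_le g k g0 k0 (gamB x y) (gamB z y)).
    replace (gamB (gamB x y) (gamB z y)) with (gamB x z) in *; [lra|].
    apply gval_inj. symmetry. apply gsub_sub2r.
  - apply infconv_ge. intros y. cut (infconv (infconv f g) k x - f y <= infconv g k (gamB x y)).
    { lra. }
    apply infconv_ge. intros w.
    pose proof (infconv_le (infconv f g) k fg0 k0 x (gamD y w)).
    pose proof (infconv_le f g f0 g0 (gamD y w) y).
    rewrite gamBDl in *.
    replace (gamB (gamB x y) w) with (gamB x (gamD y w)); [lra|].
    apply gval_inj. symmetry. apply gsubD.
Qed.

Definition kadd (h k : Kat) : Kat :=
  exist _ (infconv (kval h) (kval k)) (katetov_infconv _ _ (kval_katetov h) (kval_katetov k)).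

Lemma katetov_reflect f : katetov f -> katetov (fun x => f (gamN x)).
Proof.
  intros [h1 [h2 h3]]. split; [|split].
  - intros a b. rewrite <- (gdistN a b). apply h1.
  - intros a b. rewrite <- (gdistN a b). apply h2.
  - intros eta he. destruct (h3 eta he) as [a ha]. exists (gamN a). rewrite gamNK. exact ha.
Qed.

Definition kopp (h : Kat) : Kat :=
  exist _ (fun x => kval h (gamN x)) (katetov_reflect _ (kval_katetov h)).

Definition kzero : Kat := kat_of gam0.

Lemma kaddC h k : kadd h k = kadd k h.
Proof. apply kval_inj. intros a. apply infconvC; apply kval_ge0. Qed.

Lemma kaddA h k l : kadd h (kadd k l) = kadd (kadd h k) l.
Proof. apply kval_inj. intros x. apply infconvA; apply kval_ge0. Qed.

Lemma kadd0 h : kadd kzero h = h.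
Proof.
  apply kval_inj. intros x. simpl. destruct (kval_katetov h) as [h1 _]. apply Rle_antisym.
  - pose proof (infconv_le (fun y => gdist y gam0) (kval h) (fun _ => gdist_ge0 _ _) (kval_ge0 h)
                  x gam0) as hle.
    replace (gamB x gam0) with x in hle by (apply gval_inj; symmetry; apply gsubr0).
    rewrite gdist_xx in hle. lra.
  - apply infconv_ge. intros y. pose proof (h1 x (gamB x y)).
    replace (gdist x (gamB x y)) with (gdist y gam0) in *; [lra|].
    rewrite gdist0r. unfold gdist. simpl. rewrite gsubKr. reflexivity.
Qed.

Lemma kaddN h : kadd (kopp h) h = kzero.
Proof.
  apply kval_inj. intros x. simpl. destruct (kval_katetov h) as [h1 [h2 h3]].
  apply Rle_antisym.
  - apply Rle_plus_epsilon. intros eps he. destruct (h3 (eps / 2)) as [a ha]; [lra|].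
    pose proof (infconv_le (fun y => kval h (gamN y)) (kval h) (fun _ => kval_ge0 _ _) (kval_ge0 h)
                  x (gamN a)) as hle.
    simpl in hle. rewrite gamNK in hle.
    pose proof (h1 (gamB x (gamN a)) a).
    replace (gdist (gamB x (gamN a)) a) with (gdist x gam0) in *; [lra|].
    rewrite gdist0r. unfold gdist. simpl. rewrite goppK, <- gaddA, gaddNr, gadd0r. reflexivity.
  - apply infconv_ge. intros y. pose proof (h2 (gamB x y) (gamN y)).
    replace (gdist (gamB x y) (gamN y)) with (gdist x gam0) in *; [lra|].
    rewrite gdist0r. unfold gdist. simpl. rewrite gsubNK. reflexivity.
Qed.

Lemma kat_ofD a b : kadd (kat_of a) (kat_of b) = kat_of (gamD a b).
Proof.
  apply kval_inj. intros x. simpl. apply Rle_antisym.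
  - pose proof (infconv_le (fun y => gdist y a) (fun y => gdist y b)
                  (fun _ => gdist_ge0 _ _) (fun _ => gdist_ge0 _ _) x a) as hle.
    simpl in hle. rewrite gdist_xx in hle.
    replace (gdist (gamB x a) b) with (gdist x (gamD a b)) in hle; [lra|].
    unfold gdist. simpl. rewrite gsubD. reflexivity.
  - apply infconv_ge. intros y. pose proof (gdist_sub_le x (gamD a b) y a) as hle.
    replace (gamB (gamD a b) a) with b in hle by (symmetry; apply gamBDl). lra.
Qed.

Lemma kat_ofN a : kopp (kat_of a) = kat_of (gamN a).
Proof.
  apply kval_inj. intros x. simpl. unfold gdist. simpl.
  rewrite goppK, <- goppD, gaugeN. reflexivity.
Qed.

Definition kclose (r : R) (h k : Kat) : Prop := forall a, Rabs (kval h a - kval k a) <= r.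

Lemma kclose_sym r h k : kclose r h k -> kclose r k h.
Proof. intros H a. rewrite Rabs_minus_sym. apply H. Qed.

Lemma kclose_tri r s h k l : kclose r h k -> kclose s k l -> kclose (r + s) h l.
Proof.
  intros H1 H2 a. specialize (H1 a). specialize (H2 a).
  replace (kval h a - kval l a) with ((kval h a - kval k a) + (kval k a - kval l a)) by ring.
  eapply Rle_trans; [apply Rabs_triang|lra].
Qed.

Lemma kclose_refl h : kclose 0 h h.
Proof. intros a. rewrite Rminus_diag, Rabs_R0. lra. Qed.

Lemma kclose_le r s h k : r <= s -> kclose r h k -> kclose s h k.
Proof. intros hr H a. specialize (H a). lra. Qed.

Definition kopen (U : set Kat) : Prop :=
  forall h, U h -> exists r, 0 < r /\ forall k, kclose r h k -> U k.

Lemma kopen_topology : is_topology kopen.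
Proof.
  split.
  - intros h _. exists 1. split; [lra|auto].
  - intros U V hU hV h [hUh hVh].
    destruct (hU h hUh) as [r1 [r1p H1]]. destruct (hV h hVh) as [r2 [r2p H2]].
    exists (Rmin r1 r2). split; [apply Rmin_glb_lt; assumption|]. intros k hk. split.
    + apply H1. apply (kclose_le (Rmin r1 r2)); [apply Rmin_l|exact hk].
    + apply H2. apply (kclose_le (Rmin r1 r2)); [apply Rmin_r|exact hk].
  - intros I U hU h [i hi]. destruct (hU i h hi) as [r [rp H]].
    exists r. split; [exact rp|]. intros k hk. exists i. auto.
Qed.

Definition kball (h : Kat) (r : R) : set Kat := fun k => exists s, s < r /\ kclose s h k.

Lemma kball_open h r : kopen (kball h r).
Proof.
  intros k [s [hs hk]]. exists ((r - s) / 2). split; [lra|]. intros l hl.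
  exists (s + (r - s) / 2). split; [lra|]. eapply kclose_tri; eauto.
Qed.

Lemma kball_center h r : 0 < r -> kball h r h.
Proof. intros hr. exists 0. split; [exact hr|apply kclose_refl]. Qed.

Lemma kclose_kaddr s h h' k : kclose s h h' -> kclose s (kadd h k) (kadd h' k).
Proof.
  assert (le : forall h h', kclose s h h' -> forall a, kval (kadd h k) a <= kval (kadd h' k) a + s).
  { intros h0 h0' H a. simpl.
    cut (infconv (kval h0) (kval k) a - s <= infconv (kval h0') (kval k) a); [lra|].
    apply infconv_ge. intros y.
    pose proof (infconv_le (kval h0) (kval k) (kval_ge0 h0) (kval_ge0 k) a y).
    pose proof (Rabs_le_inv _ _ (H y)). lra. }
  intros H a. apply Rabs_le. pose proof (le h' h (kclose_sym _ _ _ H) a). pose proof (le h h' H a).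
  lra.
Qed.

Lemma kadd_cont : continuous (prod_open kopen kopen) kopen (fun p => kadd (fst p) (snd p)).
Proof.
  intros V hV [h k] hp. simpl in hp. destruct (hV _ hp) as [r [rp Hr]].
  exists (kball h (r / 2)), (kball k (r / 2)).
  split; [apply kball_open|]. split; [apply kball_open|].
  split; [apply kball_center; lra|]. split; [apply kball_center; lra|].
  intros h' k' [s1 [hs1 c1]] [s2 [hs2 c2]]. simpl. apply Hr.
  apply (kclose_le (s1 + s2)); [lra|]. apply kclose_tri with (kadd h' k).
  - apply kclose_kaddr. exact c1.
  - rewrite (kaddC h' k), (kaddC h' k'). apply kclose_kaddr. exact c2.
Qed.

Lemma kopp_cont : continuous kopen kopen kopp.
Proof.
  intros V hV h hh. destruct (hV _ hh) as [r [rp Hr]]. exists r. split; [exact rp|].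
  intros k hk. apply Hr. intros a. apply hk.
Qed.

Lemma kopen_hausdorff : hausdorff kopen.
Proof.
  intros h k hne.
  assert (exists a, kval h a <> kval k a) as [a ha].
  { apply NNPP; intro hn. apply hne, kval_inj. intros a. apply NNPP. eauto. }
  set (r := Rabs (kval h a - kval k a) / 2).
  assert (0 < Rabs (kval h a - kval k a)) by (apply Rabs_pos_lt; lra).
  exists (kball h r), (kball k r).
  split; [apply kball_open|]. split; [apply kball_open|].
  split; [apply kball_center; unfold r; lra|]. split; [apply kball_center; unfold r; lra|].
  intros z [s1 [hs1 c1]] [s2 [hs2 c2]].
  pose proof (kclose_tri _ _ _ _ _ c1 (kclose_sym _ _ _ c2) a). unfold r in *. lra.
Qed.

Definition KatGroup : TopAbGroup := {|
  carrier := Kat; gzero := kzero; gadd := kadd; gopp := kopp; gopen := kopen;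
  gaddA := kaddA; gaddC := kaddC; gadd0 := kadd0; gaddN := kaddN;
  gtop := kopen_topology; gadd_cont := kadd_cont; gopp_cont := kopp_cont |}.

Lemma kat_complete (z : nat -> Kat) :
  (forall n m, (n <= m)%nat -> kclose (half_pow n) (z n) (z m)) ->
  exists y, forall n, kclose (half_pow n) (z n) y.
Proof.
  intros hz.
  set (lim := fun a => Rinf (fun r => exists m, r = kval (z m) a + half_pow m)).
  assert (up : forall a n, lim a <= kval (z n) a + half_pow n).
  { intros a n. apply (Rinf_le _ _ 0); [|eauto].
    intros r [m ->]. pose proof (kval_ge0 (z m) a). pose proof (half_pow_pos m). lra. }
  assert (lo : forall a n, kval (z n) a - half_pow n <= lim a).
  { intros a n. apply Rinf_ge; [exists (kval (z O) a + half_pow O), O; reflexivity|].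
    intros r [m ->]. destruct (Nat.le_ge_cases n m) as [hnm|hnm].
    - pose proof (Rabs_le_inv _ _ (hz n m hnm a)). pose proof (half_pow_pos m). lra.
    - pose proof (Rabs_le_inv _ _ (hz m n hnm a)). pose proof (half_pow_pos n). lra. }
  assert (hlim : katetov lim).
  { split; [|split].
    - intros a b. apply le_of_half_pow. intros n.
      destruct (kval_katetov (z n)) as [k1 _]. specialize (k1 a b).
      pose proof (up a n). pose proof (lo b n). lra.
    - intros a b. apply le_of_half_pow. intros n.
      destruct (kval_katetov (z n)) as [_ [k2 _]]. specialize (k2 a b).
      pose proof (lo a n). pose proof (lo b n). lra.
    - intros eta he. destruct (half_pow_small (eta / 2)) as [n hn]; [lra|].
      destruct (kval_katetov (z n)) as [_ [_ k3]]. destruct (k3 (eta / 2)) as [a ha]; [lra|].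
      exists a. pose proof (up a n). lra. }
  exists (exist _ lim hlim). intros n a. unfold kval at 2. simpl.
  apply Rabs_le. pose proof (up a n). pose proof (lo a n). lra.
Qed.

(** * Compactness in the internal space *)

Definition totally_bounded (K : set Kat) : Prop :=
  forall delta, 0 < delta ->
    exists cs : list Kat, forall x, K x -> exists c, In c cs /\ kclose delta c x.

Definition kclosed (K : set Kat) : Prop :=
  forall y, (forall eps, 0 < eps -> exists z, K z /\ kclose eps z y) -> K y.

Section Compactness.
Variable K : set Kat.
Hypothesis K_tb : totally_bounded K.
Variables (I : Type) (U : I -> set Kat).

Definition uncovered (S : set Kat) : Prop :=
  ~ exists l, subset S (fun x => exists i, In i l /\ U i x).

Lemma uncovered_refine n S : subset S K -> uncovered S ->
  exists c, uncovered (fun x => S x /\ kclose (half_pow n) c x).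
Proof.
  intros hSK hS. destruct (K_tb (half_pow n) (half_pow_pos n)) as [cs Hcs].
  apply NNPP; intro hn. apply hS.
  assert (covered : forall cs', exists l, subset (fun x => S x /\ exists c, In c cs' /\
                      kclose (half_pow n) c x) (fun x => exists i, In i l /\ U i x)).
  { induction cs' as [|c cs' [l2 Hl2]].
    - exists nil. intros x [_ [c [[] _]]].
    - assert (hc : ~ uncovered (fun x => S x /\ kclose (half_pow n) c x)) by eauto.
      apply NNPP in hc. destruct hc as [l1 Hl1].
      exists (l1 ++ l2). intros x [hx [c' [[<-|hin] hcl]]].
      + destruct (Hl1 x (conj hx hcl)) as [i [hi hu]].
        exists i. split; [apply in_or_app; left|]; assumption.
      + destruct (Hl2 x (conj hx (ex_intro _ c' (conj hin hcl)))) as [i [hi hu]].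
        exists i. split; [apply in_or_app; right|]; assumption. }
  destruct (covered cs) as [l Hl]. exists l. intros x hx. apply Hl. split; [exact hx|].
  apply Hcs, hSK, hx.
Qed.

Lemma uncovered_chain : uncovered K ->
  exists cell : nat -> set Kat,
    (forall n, subset (cell n) K /\ uncovered (cell n)) /\
    (forall n, subset (cell (S n)) (cell n)) /\
    (forall n, exists c, forall x, cell (S n) x -> kclose (half_pow (S n)) c x).
Proof.
  intros hK.
  assert (ex_step : forall n S, exists S', subset S K -> uncovered S ->
      uncovered S' /\ subset S' S /\ exists c, forall x, S' x -> kclose (half_pow n) c x).
  { intros n S. destruct (classic (subset S K /\ uncovered S)) as [[h1 h2]|h].
    - destruct (uncovered_refine n S h1 h2) as [c hc].
      exists (fun x => S x /\ kclose (half_pow n) c x). intros _ _.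
      split; [exact hc|]. split; [intros x [hx _]; exact hx|]. exists c. intros x [_ hx]. exact hx.
    - exists S. intros h1 h2. exfalso. auto. }
  pose (step n S := proj1_sig (constructive_indefinite_description _ (ex_step n S))).
  pose proof (fun n S => proj2_sig (constructive_indefinite_description _ (ex_step n S)))
    as step_spec.
  fold step in step_spec. simpl in step_spec.
  pose (cell := fix cell n := match n with O => K | S m => step (S m) (cell m) end).
  assert (inv : forall n, subset (cell n) K /\ uncovered (cell n)).
  { induction n as [|n [IH1 IH2]]; [split; [intros x hx; exact hx|exact hK]|].
    destruct (step_spec (S n) (cell n) IH1 IH2) as [h1 [h2 _]].
    split; [intros x hx; apply IH1, h2, hx|exact h1]. }
  exists cell. split; [exact inv|]. split.
  - intros n. destruct (inv n) as [h1 h2]. apply (step_spec (S n) (cell n) h1 h2).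
  - intros n. destruct (inv n) as [h1 h2]. apply (step_spec (S n) (cell n) h1 h2).
Qed.

Hypothesis K_closed : kclosed K.
Hypothesis U_open : forall i, kopen (U i).
Hypothesis U_cover : subset K (fun x => exists i, U i x).

Lemma finite_subcover : ~ uncovered K.
Proof.
  intros hK. destruct (uncovered_chain hK) as [cell [inv [sub small]]].
  assert (mono : forall n m, (n <= m)%nat -> subset (cell m) (cell n)).
  { induction 1; intros x hx; [exact hx|]. apply IHle, sub, hx. }
  assert (nonempty : forall n, exists x, cell n x).
  { intros n. apply NNPP; intro hn. apply (proj2 (inv n)).
    exists nil. intros x hx. exfalso. eauto. }
  pose (pt n := proj1_sig (constructive_indefinite_description _ (nonempty n))).
  assert (pt_spec : forall n, cell n (pt n)).
  { intros n. exact (proj2_sig (constructive_indefinite_description _ (nonempty n))). }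
  assert (cauchy : forall n m, (n <= m)%nat -> kclose (half_pow n) (pt (S n)) (pt (S m))).
  { intros n m hnm. destruct (small n) as [c hc].
    replace (half_pow n) with (half_pow (S n) + half_pow (S n)) by (rewrite half_pow_S; field).
    apply kclose_tri with c; [apply kclose_sym, hc, pt_spec|].
    apply hc, (mono (S n) (S m)); [lia|apply pt_spec]. }
  destruct (kat_complete (fun n => pt (S n)) cauchy) as [y Hy].
  assert (Ky : K y).
  { apply K_closed. intros eps he. destruct (half_pow_small eps he) as [n hn].
    exists (pt (S n)). split; [apply (proj1 (inv (S n))), pt_spec|].
    apply (kclose_le (half_pow n)); [exact hn|apply Hy]. }
  destruct (U_cover y Ky) as [i hi]. destruct (U_open i y hi) as [r [rp Hr]].
  destruct (half_pow_small (r / 2)) as [n hn]; [lra|].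
  apply (proj2 (inv (S n))). exists (i :: nil). intros x hx. exists i. split; [left; reflexivity|].
  apply Hr. destruct (small n) as [c hc].
  apply (kclose_le (half_pow n + (half_pow (S n) + half_pow (S n)))); [rewrite half_pow_S; lra|].
  apply kclose_tri with (pt (S n)); [apply kclose_sym, Hy|].
  apply kclose_tri with c; [apply kclose_sym, hc, pt_spec|apply hc, hx].
Qed.

End Compactness.

Lemma kat_compact K : totally_bounded K -> kclosed K -> compact kopen K.
Proof.
  intros htb hcl I U HU Hcov. apply NNPP. exact (finite_subcover K htb I U hcl HU Hcov).
Qed.

Hypothesis A2 : forall e, 0 < e < C -> locally_finite (P e).
Hypothesis A4 : forall e, 0 < e < C -> relatively_dense (P e).

Lemma kclose_kat_of a b : kclose (gdist a b) (kat_of a) (kat_of b).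
Proof.
  intros x. simpl. apply Rabs_le. pose proof (gdist_tri x a b). pose proof (gdist_tri x b a).
  rewrite (gdistC b a) in *. lra.
Qed.

Lemma kclose_kval h a : kclose (kval h a) h (kat_of a).
Proof.
  intros x. simpl. destruct (kval_katetov h) as [k1 [k2 _]].
  pose proof (k1 x a). pose proof (k2 x a). apply Rabs_le. lra.
Qed.

Lemma gdist_le_kclose r a b : kclose r (kat_of a) (kat_of b) -> gdist b a <= r.
Proof.
  intros H. specialize (H b). simpl in H. rewrite gdist_xx, Rminus_0_r in H.
  rewrite Rabs_pos_eq in H by apply gdist_ge0. exact H.
Qed.

Lemma gamma_list (l : list G) : exists l' : list Gamma, forall a, In (gval a) l -> In a l'.
Proof.
  induction l as [|x l [l' Hl']]; [exists nil; intros a []|].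
  destruct (classic (span_P x)) as [hx|hx].
  - exists (exist _ x hx :: l'). intros a [ha|ha]; [left|right; auto].
    apply gval_inj. exact ha.
  - exists l'. intros a [ha|ha]; [|auto].
    exfalso. apply hx. rewrite ha. exact (proj2_sig a).
Qed.

Definition kcball (c : Kat) (r : R) : set Kat := fun k => kclose r c k.

(* A ball of radius [r < C] around [c] is covered by the [eta]-balls around the points
   [a + k], where [kval c a <= eta] and [k] ranges over the finitely many points of
   [P (r + 4 eta)] in the compact set making [P eta] relatively dense. *)
Lemma kcball_totally_bounded c r : 0 < r < C -> totally_bounded (kcball c r).
Proof.
  intros hr delta hd.
  set (eta := Rmin (delta / 2) ((C - r) / 8)).
  assert (0 < eta) by (apply Rmin_glb_lt; lra).
  assert (eta <= delta / 2) by apply Rmin_l.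
  assert (eta <= (C - r) / 8) by apply Rmin_r.
  destruct (kval_katetov c) as [_ [kc2 kc3]]. destruct (kc3 eta) as [a ha]; [lra|].
  set (s := r + 3 * eta).
  destruct (A4 eta ltac:(lra)) as [Kg [hKg hdense]].
  destruct (A2 (s + eta) ltac:(unfold s; lra) Kg hKg) as [l hl].
  destruct (gamma_list (map (gadd (gval a)) l)) as [l' hl'].
  exists (map kat_of l'). intros psi hpsi.
  destruct (kval_katetov psi) as [_ [_ kp3]]. destruct (kp3 eta) as [b hb]; [lra|].
  assert (hdb : gdist b a <= r + 2 * eta).
  { pose proof (kc2 b a). pose proof (Rabs_le_inv _ _ (hpsi b)). lra. }
  destruct (hdense (gadd (gval b) (gopp (gval a)))) as [p [k [hp [hk hpk]]]].
  assert (hPk : P (s + eta) k).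
  { apply A3; try (unfold s; lra). exists (gadd (gval b) (gopp (gval a))), (gopp p).
    split; [apply P_of_gauge_lt; unfold s, gdist in *; lra|]. split.
    - apply (proj2 (A1 eta ltac:(lra))). rewrite goppK. exact hp.
    - rewrite hpk, gaddAC, gaddNr, gadd0. reflexivity. }
  assert (hspan : span_P (gadd (gval a) k)).
  { apply span_PD; [exact (proj2_sig a)|]. apply (span_P_of (s + eta)); [unfold s; lra|exact hPk]. }
  exists (kat_of (exist _ _ hspan)). split.
  - apply in_map, hl'. simpl. apply in_map, hl; assumption.
  - apply (kclose_le (eta + eta)); [lra|]. apply kclose_tri with (kat_of b).
    + eapply kclose_le; [|apply kclose_kat_of]. rewrite gdistC. unfold gdist. simpl.
      rewrite <- gsubD, hpk, <- gaddA, gaddNr, gadd0r. apply gauge_le; [lra|exact hp].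
    + apply kclose_sym. apply (kclose_le (kval psi b)); [exact hb|apply kclose_kval].
Qed.

Lemma kcball_closed c r : kclosed (kcball c r).
Proof.
  intros y H a. apply Rle_plus_epsilon. intros eps he. destruct (H eps he) as [z [hz hzy]].
  exact (kclose_tri _ _ _ _ _ hz hzy a).
Qed.

Lemma kcball_compact c r : 0 < r < C -> compact kopen (kcball c r).
Proof.
  intros hr. apply kat_compact; [apply kcball_totally_bounded; exact hr|apply kcball_closed].
Qed.

Lemma KatGroup_LCA : LCA KatGroup.
Proof.
  split; [apply kopen_hausdorff|].
  intros h. exists (kball h (C / 2)), (kcball h (C / 2)).
  split; [apply kball_open|]. split; [apply kball_center; lra|].
  split; [apply kcball_compact; lra|].
  intros k [s [hs hk]]. apply (kclose_le s); [lra|exact hk].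
Qed.

Hypothesis G_LCA : LCA G.

(** * The cut and project scheme *)

Definition lattice : set (G * KatGroup) := fun p => exists a, fst p = gval a /\ snd p = kat_of a.

Lemma lattice_subgroup : is_subgroup lattice.
Proof.
  split; [|split].
  - exists gam0. split; reflexivity.
  - intros [x h] [y k] [a [hx hh]] [b [hy hk]]. simpl in *. subst.
    exists (gamD a b). split; [reflexivity|]. apply kat_ofD.
  - intros [x h] [a [hx hh]]. simpl in *. subst.
    exists (gamN a). split; [reflexivity|]. apply kat_ofN.
Qed.

(* Near [(a, kat_of a)], a lattice point [(b, kat_of b)] has [b - a] close to [0] in [G] and
   of gauge [< C/2], hence in [P (C/2)], which is discrete near [0]. *)
Lemma lattice_discrete : discrete_in lattice.
Proof.
  intros [x h] [a [hx hh]]. simpl in hx, hh. subst.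
  destruct (locally_finite_isolated G (proj1 G_LCA) (P (C / 2)) (proj2 G_LCA)
              (A2 (C / 2) ltac:(lra))) as [V [hV [hV0 hVP]]].
  exists (fun q => V (gadd (fst q) (gopp (gval a))) /\ kball (kat_of a) (C / 2) (snd q)).
  split; [|split].
  - intros [y k] [hy hk]. exists (fun y => V (gadd y (gopp (gval a)))), (kball (kat_of a) (C / 2)).
    split; [apply gopen_transl; exact hV|]. split; [apply kball_open|].
    split; [exact hy|]. split; [exact hk|]. intros; split; assumption.
  - simpl. rewrite gaddNr. split; [exact hV0|apply kball_center; lra].
  - intros [y k] [hy [s [hs hk]]] [b [hb hk']]. simpl in *. subst.
    apply gdist_le_kclose in hk.
    assert (gadd (gval b) (gopp (gval a)) = gzero) as hba.
    { apply hVP; [exact hy|]. apply P_of_gauge_lt; unfold gdist in hk; lra. }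
    apply gsub_eq0 in hba. assert (b = a) as -> by (apply gval_inj; exact hba). reflexivity.
Qed.

(* Every [(g, h)] is a lattice point [(gval c, kat_of c)] plus a point of [K x cball 0 (C/2)],
   where [K] makes [P (C/4)] relatively dense and [c = a + p] with [kval h a <= C/4] and
   [g - gval a = p + k], [p] in [P (C/4)], [k] in [K]. *)
Lemma lattice_cocompact : cocompact lattice.
Proof.
  destruct (A4 (C / 4) ltac:(lra)) as [K [hK hdense]].
  exists (fun q => K (fst q) /\ kcball kzero (C / 2) (snd q)). split.
  - apply compact_prod; [apply gtop|exact hK|apply kcball_compact; lra].
  - intros [g h]. destruct (kval_katetov h) as [_ [_ kh3]].
    destruct (kh3 (C / 4)) as [a ha]; [lra|].
    destruct (hdense (gadd g (gopp (gval a)))) as [p [k [hp [hk hpk]]]].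
    set (c := gamD a (exist _ p (span_P_of (C / 4) p ltac:(lra) hp))).
    exists (gval c, kat_of c), (k, kadd h (kopp (kat_of c))). split; [|split].
    + exists c. split; reflexivity.
    + simpl. split; [exact hk|]. unfold kcball.
      rewrite <- (kaddN (kat_of c)), (kaddC (kopp (kat_of c))).
      apply kclose_kaddr. apply (kclose_le (kval h a + C / 4)); [lra|].
      apply kclose_sym. apply kclose_tri with (kat_of a); [apply kclose_kval|].
      eapply kclose_le; [|apply kclose_kat_of]. unfold gdist. simpl.
      rewrite goppD, gaddA, gaddNr, gadd0, gaugeN. apply gauge_le; [lra|exact hp].
    + unfold padd. simpl. f_equal.
      * rewrite <- gaddA, <- hpk, gaddCA, gaddNr, gadd0r. reflexivity.
      * rewrite (kaddC h), kaddA, (kaddC (kat_of c)), kaddN, kadd0. reflexivity.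
Qed.

Lemma lattice_cps : cut_and_project_scheme G KatGroup lattice.
Proof.
  split; [exact KatGroup_LCA|]. split.
  { split; [exact lattice_subgroup|]. split; [exact lattice_discrete|exact lattice_cocompact]. }
  split.
  - intros [x h] [y k] [a [hx hh]] [b [hy hk]] e. simpl in *. subst.
    assert (a = b) as -> by (apply gval_inj; exact e). reflexivity.
  - intros h U hU hh. destruct (hU h hh) as [r [rp Hr]]. destruct (kval_katetov h) as [_ [_ k3]].
    destruct (k3 r rp) as [a ha]. exists (kat_of a). split.
    + apply Hr. apply (kclose_le (kval h a)); [exact ha|apply kclose_kval].
    + exists (gval a), a. split; reflexivity.
Qed.

Section Window.
Variable e : R.
Hypothesis He : 0 < e < C.

(* The open ball only produces points of gauge [< e]; the points of [P e] of gauge exactly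
   [e] are added by hand. *)
Definition window : set KatGroup :=
  fun k => kball kzero e k \/ exists p, P e (gval p) /\ k = kat_of p.

Lemma window_sub_kcball : subset window (kcball kzero e).
Proof.
  intros k [[s [hs hk]]|[p [hp ->]]].
  - apply (kclose_le s); [lra|exact hk].
  - eapply kclose_le; [|apply kclose_kat_of]. rewrite gdistC, gdist0r. apply gauge_le; assumption.
Qed.

Lemma window_closure_sub_kcball : subset (closure kopen window) (kcball kzero e).
Proof.
  intros y hy. apply kcball_closed. intros eps he.
  destruct (hy (kball y eps) (kball_open y eps) (kball_center y eps he)) as [w [[s [hs hw]] hW]].
  exists w. split; [apply window_sub_kcball; exact hW|].
  apply kclose_sym. apply (kclose_le s); [lra|exact hw].
Qed.

Lemma window_precompact : precompact kopen window.
Proof.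
  apply kat_compact.
  - intros delta hd. destruct (kcball_totally_bounded kzero e He delta hd) as [cs Hcs].
    exists cs. intros x hx. apply Hcs, window_closure_sub_kcball, hx.
  - intros y H U hU hUy. destruct (hU y hUy) as [r [rp Hr]].
    destruct (H (r / 2)) as [z [hz hzy]]; [lra|].
    destruct (hz (kball z (r / 2)) (kball_open z (r / 2)) (kball_center z (r / 2) ltac:(lra)))
      as [w [[s [hs hw]] hW]].
    exists w. split; [|exact hW]. apply Hr. apply (kclose_le (r / 2 + s)); [lra|].
    apply kclose_tri with z; [apply kclose_sym|]; assumption.
Qed.

Lemma window_interior : nonempty_interior kopen window.
Proof.
  exists (kball kzero e). split; [apply kball_open|]. split.
  - exists kzero. apply kball_center. lra.
  - intros k hk. left. exact hk.
Qed.

Lemma kat_of_add_Pcap p i (hp : span_P p) (hi : Pcap i) (hpi : span_P (gadd p i)) :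
  kat_of (exist _ (gadd p i) hpi) = kat_of (exist _ p hp).
Proof.
  apply kval_inj. intros y. simpl. unfold gdist. simpl.
  assert (gauge i = 0) as hi0 by (apply gauge_eq0; exact hi).
  assert (gauge (gopp i) = 0) as hNi0 by (rewrite gaugeN; exact hi0).
  apply Rle_antisym.
  - rewrite <- gsubD. pose proof (gaugeD (gadd (gval y) (gopp p)) (gopp i)). lra.
  - pose proof (gaugeD (gadd (gval y) (gopp (gadd p i))) i) as h.
    replace (gadd (gadd (gval y) (gopp (gadd p i))) i) with (gadd (gval y) (gopp p)) in h; [lra|].
    rewrite <- gsubD, <- gaddA, gaddN, gadd0r. reflexivity.
Qed.

Lemma window_set_eq : seteq (setadd (P e) Pcap) (window_set lattice window).
Proof.
  intros x. split.
  - intros [p [i [hp [hi ->]]]].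
    assert (hsp : span_P p) by (apply (span_P_of e); assumption).
    assert (hsi : span_P i) by (apply (span_P_of e); [exact He|apply hi; exact He]).
    set (m := exist _ (gadd p i) (span_PD _ _ hsp hsi) : Gamma).
    exists (kat_of m). split; [exists m; split; reflexivity|].
    right. exists (exist _ p hsp). split; [exact hp|]. apply kat_of_add_Pcap. exact hi.
  - intros [h [[m [hm1 hm2]] hW]]. simpl in hm1, hm2. subst.
    destruct hW as [[s [hs hk]]|[p [hp hpm]]].
    + specialize (hk m). simpl in hk. rewrite gdist_xx, Rminus_0_r, gdist0r in hk.
      rewrite Rabs_pos_eq in hk by apply gauge_ge0.
      exists (gval m), gzero. split; [apply P_of_gauge_lt; lra|]. split.
      * intros e' he'. exact (proj1 (A1 e' he')).
      * rewrite gadd0r. reflexivity.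
    + assert (gdist p m = 0) as hz.
      { pose proof (f_equal (fun k => kval k p) hpm) as h. simpl in h. rewrite gdist_xx in h.
        exact h. }
      exists (gval p), (gadd (gval m) (gopp (gval p))). split; [exact hp|]. split.
      * apply gauge_eq0. unfold gdist in hz. rewrite <- gaugeN, goppB. exact hz.
      * rewrite gaddCA, gaddNr, gadd0r. reflexivity.
Qed.

Lemma model_set_add_Pcap : model_set G (setadd (P e) Pcap).
Proof.
  exists KatGroup, lattice, window.
  split; [exact lattice_cps|]. split; [exact window_precompact|].
  split; [exact window_interior|exact window_set_eq].
Qed.

End Window.
End Construction.

Lemma model_set_ext (G : TopAbGroup) (A B : set G) : seteq A B -> model_set G B -> model_set G A.
Proof.
  intros hAB [H [L [W [hcps [hpre [hint hB]]]]]]. exists H, L, W.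
  split; [exact hcps|]. split; [exact hpre|]. split; [exact hint|].
  intros x. rewrite (hAB x). apply hB.
Qed.

Lemma setadd_zero_r (G : TopAbGroup) (A Z : set G) :
  (forall x, Z x <-> x = gzero) -> seteq A (setadd A Z).
Proof.
  intros hZ x. split.
  - intros hx. exists x, gzero. split; [exact hx|]. split; [apply hZ; reflexivity|].
    rewrite gadd0r. reflexivity.
  - intros [a [z [ha [hz ->]]]]. apply hZ in hz. subst. rewrite gadd0r. exact ha.
Qed.

Theorem corollary2p10 (G : TopAbGroup) (HG : LCA G) (Hsig : sigma_compact G)
  (C : R) (HC : 0 < C) (P : R -> set G)
  (A1 : forall e, 0 < e < C -> P e gzero /\ (forall x, P e x <-> P e (gopp x)))
  (A2 : forall e, 0 < e < C -> locally_finite (P e))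
  (A3 : forall e e', 0 < e -> 0 < e' -> e + e' < C ->
          subset (setadd (P e) (P e')) (P (e + e')))
  (A4 : forall e, 0 < e < C -> relatively_dense (P e)) :
  (forall e, 0 < e < C ->
     model_set G (setadd (P e) (fun x => forall e', 0 < e' < C -> P e' x))) /\
  ((forall x, (forall e', 0 < e' < C -> P e' x) <-> x = gzero) ->
     forall e, 0 < e < C -> model_set G (P e)).
Proof.
  assert (hmodel : forall e, 0 < e < C -> model_set G (setadd (P e) (Pcap G C P))).
  { intros e he. exact (model_set_add_Pcap G C HC P A1 A3 A2 A4 HG e he). }
  split; [exact hmodel|].
  intros hcap e he. apply (model_set_ext _ _ _ (setadd_zero_r G (P e) _ hcap)), hmodel, he.
Qed.
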